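(* Let $A=J(\lambda,n)\in\mathrm{SL}(n,\mathbb{C})$ be a single Jordan block with $|\lambda|=1$. For $b\in\mathbb{C}$ with $|b|=1$, let $B=[b_{i,j}]_{1\le i,j\le n}$ be defined by $b_{i,j}=0$ if $j<i$; $b_{i,j}=(-1)^{j+1}\binom{j-2}{i-2}\dfrac{b}{\lambda^{i+j-2}}$ if $j\ge i$ and $i>1$; $b_{1,1}=b$; and $b_{1,j}=0$ for $2\le j\le n$. Then for a suitable choice of $b$ with $|b|=1$, the matrix $B$ lies in $\mathrm{SL}(n,\mathbb{C})$, satisfies $B\overline{B}=I$, and $BAB^{-1}=\overline{A}^{-1}$; that is, $B$ is a strong $c$-reverser of $A$.
   Context: $J(\lambda,n)$ is the $n\times n$ Jordan block with $\lambda$ on the diagonal and $1$ on the superdiagonal. $\overline{g}$ denotes entrywise complex conjugation. *)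

From HB Require Import structures.
From mathcomp Require Import all_boot all_order all_algebra.
From mathcomp Require Import complex.
From mathcomp Require Import reals.
Set Implicit Arguments. Unset Strict Implicit. Unset Printing Implicit Defensive.
Import Order.TTheory GRing.Theory Num.Theory.
Local Open Scope ring_scope.

(* Convention: matrices are indexed by 'I_n, i.e. 0-based indices;
   the paper's 1-based index i corresponds to the ordinal i-1. *)

Definition jordan_block {F : pzRingType} (n : nat) (lam : F) : 'M[F]_n :=
  \matrix_(i < n, j < n)
    ((i == j :> nat)%:R * lam + (j == i.+1 :> nat)%:R).

Definition mxconj {R : rcfType} {m n : nat} (M : 'M[R[i]]_(m, n)) :=
  map_mx (@conjc R) M.

(* The matrix B of the statement, with 0-based indices i, j
   (paper indices i+1, j+1):
   - entry 0 if j < i;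
   - row 0: b at (0,0), 0 elsewhere;
   - i >= 1, j >= i: (-1)^(j+2) * C(j-1, i-1) * b / lam^(i+j). *)
Definition Bmat {R : rcfType} (n : nat) (lam b : R[i]) : 'M[R[i]]_n :=
  \matrix_(i < n, j < n)
    (if (j < i)%N then 0
     else if i == 0 :> nat then (if j == 0 :> nat then b else 0)
     else (-1) ^+ (j.+2) * ('C(j.-1, i.-1))%:R * b / lam ^+ (i + j)).

From HB Require Import structures.
From mathcomp Require Import all_boot all_order all_algebra.
From mathcomp Require Import complex.
From mathcomp Require Import reals.
From mathcomp Require Import ring.
Import Order.TTheory GRing.Theory Num.Theory.
Set Implicit Arguments. Unset Strict Implicit. Unset Printing Implicit Defensive.
Local Open Scope ring_scope.

(** Since J(lam^-1) B J(lam) = B (entrywise this is Pascal's rule for the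
binomial coefficients in B) and conj lam = lam^-1, B conjugates J to
J(lam^-1)^-1 = conj(J)^-1 once B is invertible. Conjugating the same identity
shows that B conj(B) commutes with J(lam^-1); a matrix commuting with a Jordan
block is determined by its first row, and the first row of B is (b, 0, ..., 0)
with |b| = 1, so B conj(B) = 1. Finally B is upper triangular with unimodular
diagonal entries b, -b/lam^2, b/lam^4, ..., so det B = b^n d with |d| = 1, and
b an n-th root of 1/d gives det B = 1. *)

Section JordanProducts.
Variables (F : pzRingType) (n : nat) (a : F) (X : 'M[F]_n).

Local Ltac simp := rewrite ?(mulr0n, mulr1n, mul0r, mul1r, mulr0, mulr1, add0r, addr0).

Lemma mulmx_jordan0 (i k : 'I_n) : val k = 0 -> (X *m jordan_block n a) i k = X i k * a.
Proof.
move=> k0; rewrite mxE (bigD1 k) //= mxE eqxx k0 /=; simp.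
rewrite big1 ?addr0 // => l /negbTE lk.
by rewrite mxE (lk : (l == k :> nat) = false) k0; simp.
Qed.

Lemma mulmx_jordanS (i j k : 'I_n) : val k = j.+1 ->
  (X *m jordan_block n a) i k = X i k * a + X i j.
Proof.
move=> kj; have kj' : k != j by rewrite -val_eqE kj /= eqn_leq ltnn.
rewrite mxE (bigD1 k) //= (bigD1 j) 1?eq_sym //= !mxE eqxx kj eqxx ltn_eqF //.
rewrite [j == j.+1 :> nat]ltn_eqF //; simp.
rewrite big1 ?addr0 // => l /andP [/negbTE lk /negbTE lj].
by rewrite mxE (lk : (l == k :> nat) = false) kj eqSS eq_sym (lj : (l == j :> nat) = false); simp.
Qed.

Lemma jordan_mulmx_last (i k : 'I_n) : i.+1 = n ->
  (jordan_block n a *m X) i k = a * X i k.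
Proof.
move=> i_last; rewrite mxE (bigD1 i) //= mxE eqxx ltn_eqF //; simp.
rewrite big1 ?addr0 // => l /negbTE li.
have l_le_i : (l <= i)%N by rewrite -ltnS i_last ltn_ord.
by rewrite mxE eq_sym (li : (l == i :> nat) = false) ltn_eqF //; simp.
Qed.

Lemma jordan_mulmxS (i j k : 'I_n) : val j = i.+1 ->
  (jordan_block n a *m X) i k = a * X i k + X j k.
Proof.
move=> ji; have ij : i != j by rewrite -val_eqE ji /= eqn_leq ltnn andbF.
rewrite mxE (bigD1 i) //= (bigD1 j) 1?eq_sym //= !mxE eqxx ji eqxx ltn_eqF //=; simp.
rewrite big1 ?addr0 // => l /andP [/negbTE li /negbTE lj].
by rewrite mxE eq_sym (li : (l == i :> nat) = false) -ji (lj : (l == j :> nat) = false); simp.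
Qed.
End JordanProducts.

Lemma jordan_commutant_row0 (F : comNzRingType) n (mu : F) (X : 'M[F]_n.+1) :
  X *m jordan_block n.+1 mu = jordan_block n.+1 mu *m X ->
  row 0 X = row 0 1%:M -> X = 1%:M.
Proof.
move=> XJ X0; apply/matrixP => i k; rewrite mxE.
elim: {i}(val i) {-2}i (erefl (val i)) k => [|m IHm] i i_m k.
  have -> : i = 0 by apply: val_inj.
  by have := congr1 (fun r : 'rV_n.+1 => r 0 k) X0; rewrite !mxE.
have m_lt : (m < n.+1)%N by apply: leq_trans (ltn_ord i); rewrite i_m.
(* Entry (m, k) of X J = J X reads X (m+1) k = X m (k-1), and X (m+1) 0 = 0. *)
have := congr1 (fun M : 'M_n.+1 => M (Ordinal m_lt) k) XJ.
rewrite (@jordan_mulmxS _ _ _ _ (Ordinal m_lt) i) //.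
case k_eq: (val k) => [|k'] XJmk.
  apply: (addrI (mu * X (Ordinal m_lt) k)).
  by rewrite -XJmk mulmx_jordan0 // mulrC -val_eqE i_m k_eq /= addr0.
have k'_lt : (k' < n.+1)%N by apply: leq_trans (ltn_ord k); rewrite k_eq.
apply: (addrI (mu * X (Ordinal m_lt) k)).
rewrite -XJmk (@mulmx_jordanS _ _ _ _ _ (Ordinal k'_lt)) //.
by rewrite (IHm (Ordinal m_lt) erefl (Ordinal k'_lt)) mulrC -!val_eqE i_m k_eq.
Qed.

Lemma intertwine_invmx (R : comUnitRingType) n (A B C : 'M[R]_n) :
  C *m B *m A = B -> B \in unitmx -> B *m A *m invmx B = invmx C.
Proof.
move=> CBA Bu; set X := B *m A *m invmx B.
have CX1 : C *m X = 1%:M by rewrite !mulmxA CBA mulmxV.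
have [Cu _] := mulmx1_unit CX1.
by rewrite -[LHS]mul1mx -(mulVmx Cu) -mulmxA CX1 mulmx1.
Qed.

Lemma conjc_norm1 (R : rcfType) (x : R[i]) : `|x| = 1 -> x^*%C = x^-1.
Proof. by move=> x1; rewrite invc_norm x1 expr1n invr1 mul1r. Qed.

Lemma mxconjM (R : rcfType) m n p (A : 'M[R[i]]_(m, n)) (B : 'M[R[i]]_(n, p)) :
  mxconj (A *m B) = mxconj A *m mxconj B.
Proof. exact: map_mxM. Qed.

Lemma mxconj_jordan (R : rcfType) n (a : R[i]) :
  mxconj (jordan_block n a) = jordan_block n a^*%C.
Proof. by apply/matrixP => i j; rewrite !mxE rmorphD rmorphM /= !conjc_nat. Qed.

Section Bmatrix.
Variables (R : rcfType) (lam b : R[i]).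

Definition Bcoef (i j : nat) : R[i] :=
  if (j < i)%N then 0
  else if i == 0 :> nat then (if j == 0 :> nat then b else 0)
  else (-1) ^+ (j.+2) * ('C(j.-1, i.-1))%:R * b / lam ^+ (i + j).

Lemma BmatE n (i j : 'I_n) : Bmat n lam b i j = Bcoef i j.
Proof. by rewrite mxE. Qed.

Lemma Bcoef_lt i j : (j < i)%N -> Bcoef i j = 0.
Proof. by rewrite /Bcoef => ->. Qed.

Lemma Bcoef00 : Bcoef 0 0 = b. Proof. by []. Qed.
Lemma Bcoef0S j : Bcoef 0 j.+1 = 0. Proof. by []. Qed.
Lemma BcoefS0 i : Bcoef i.+1 0 = 0. Proof. by []. Qed.

Lemma BcoefSS i j :
  Bcoef i.+1 j.+1 = (-1) ^+ j.+1 * ('C(j, i))%:R * b / lam ^+ (i + j).+2.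
Proof.
rewrite /Bcoef ltnS; have [ji | _] := ltnP j i.
  by rewrite bin_small ?mulr0 ?mul0r.
by rewrite addSn addnS !exprS !mulN1r opprK.
Qed.

Lemma Bcoef_jordan0 i : lam != 0 -> (lam^-1 * Bcoef i 0 + Bcoef i.+1 0) * lam = Bcoef i 0.
Proof.
move=> lam0; case: i => [|i]; rewrite ?Bcoef00 ?BcoefS0; first by field.
by rewrite mulr0 addr0 mul0r.
Qed.

Lemma Bcoef_jordanS i k : lam != 0 ->
  (lam^-1 * Bcoef i k.+1 + Bcoef i.+1 k.+1) * lam + (lam^-1 * Bcoef i k + Bcoef i.+1 k)
  = Bcoef i k.+1.
Proof.
move=> lam0; have lamX0 m : lam ^+ m != 0 by rewrite expf_neq0.
case: i => [|i]; case: k => [|k];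
  rewrite ?Bcoef00 ?Bcoef0S ?BcoefS0 ?BcoefSS ?addnS ?addSn !exprS.
- by rewrite bin0; field.
- by rewrite !bin0; field; rewrite lamX0.
- rewrite (@bin_small 0 i.+1) //; move: 'C(0, i)%:R => c.
  by field; rewrite lamX0.
- rewrite binS natrD; move: 'C(k, i)%:R 'C(k, i.+1)%:R 'C(k.+1, i)%:R => c c' c''.
  by field; rewrite lamX0.
Qed.

Lemma jordanV_mulmx_BmatE n (i k : 'I_n) :
  (jordan_block n lam^-1 *m Bmat n lam b) i k = lam^-1 * Bcoef i k + Bcoef i.+1 k.
Proof.
have [i_lt | i_last] := ltnP i.+1 n.
  by rewrite (@jordan_mulmxS _ _ _ _ _ (Ordinal i_lt)) // !BmatE.
have i_n : i.+1 = n by apply/eqP; rewrite eqn_leq i_last ltn_ord.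
rewrite jordan_mulmx_last // BmatE (@Bcoef_lt i.+1) ?addr0 //.
by rewrite i_n.
Qed.

Lemma jordanV_Bmat_jordan n : lam != 0 ->
  jordan_block n lam^-1 *m Bmat n lam b *m jordan_block n lam = Bmat n lam b.
Proof.
move=> lam0; apply/matrixP => i k; case k_eq: (val k) => [|k'].
  by rewrite mulmx_jordan0 // jordanV_mulmx_BmatE BmatE k_eq Bcoef_jordan0.
have k'_lt : (k' < n)%N by apply: leq_trans (ltn_ord k); rewrite k_eq.
rewrite (@mulmx_jordanS _ _ _ _ _ (Ordinal k'_lt)) // !jordanV_mulmx_BmatE.
by rewrite BmatE k_eq Bcoef_jordanS.
Qed.

Lemma trmx_Bmat_trig n : is_trig_mx (Bmat n lam b)^T.
Proof. by apply/is_trig_mxP => i j ij; rewrite mxE BmatE Bcoef_lt. Qed.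

Lemma normr_det_Bmat n : `|lam| = 1 -> `|\det (Bmat n lam b)| = `|b| ^+ n.
Proof.
move=> lam1; rewrite -det_tr det_trig ?trmx_Bmat_trig // normr_prod.
rewrite -[n in RHS]card_ord -prodr_const; apply: eq_bigr => -[[|i] lt_in] _.
  by rewrite mxE BmatE.
rewrite mxE BmatE BcoefSS binn !normrM normfV !normrX normrN1 lam1 !expr1n.
by rewrite normr1 invr1 !mul1r mulr1.
Qed.

Lemma Bmat_scale n : Bmat n lam b = b *: Bmat n lam 1.
Proof.
apply/matrixP => i j; rewrite !mxE.
case: ifP => _; first by rewrite mulr0.
case: ifP => _; first by case: ifP; rewrite ?mulr1 ?mulr0.
by rewrite mulr1 mulrAC [RHS]mulrC.
Qed.

Lemma Bmat_mulmx_conj n : `|lam| = 1 -> `|b| = 1 ->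
  Bmat n lam b *m mxconj (Bmat n lam b) = 1%:M.
Proof.
move=> lam1 b1; have lam0 : lam != 0 by rewrite -normr_eq0 lam1 oner_eq0.
case: n => [|n]; first by apply/matrixP => -[].
set B := Bmat _ lam b; set K := jordan_block n.+1 lam^-1; set J := jordan_block n.+1 lam.
have KBJ : K *m B *m J = B by exact: jordanV_Bmat_jordan.
have JcBK : J *m mxconj B *m K = mxconj B.
  rewrite -[RHS](congr1 (@mxconj _ _ _) KBJ) !mxconjM !mxconj_jordan.
  by rewrite conjc_inv conjc_norm1 // invrK.
apply: (@jordan_commutant_row0 _ _ lam^-1); first by rewrite -{2}JcBK !mulmxA KBJ.
apply/rowP => k; rewrite !mxE (bigD1 0) //= big1 ?addr0 => [|j j0]; last first.
  by case: j j0 => [[|j] lt_j] //= _; rewrite /B BmatE Bcoef0S mul0r.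
rewrite /B BmatE mxE BmatE Bcoef00; case: k => -[|k] lt_k.
  by rewrite Bcoef00 -sqr_normc b1 expr1n.
by rewrite Bcoef0S conjc0 mulr0.
Qed.

End Bmatrix.

Theorem lemma3p7 (R : realType) (n : nat) (lam : R[i]) :
  (0 < n)%N ->
  `|lam| = 1 ->
  \det (jordan_block n lam) = 1 ->
  exists b : R[i],
    `|b| = 1 /\
    \det (Bmat n lam b) = 1 /\
    Bmat n lam b *m mxconj (Bmat n lam b) = 1%:M /\
    Bmat n lam b *m jordan_block n lam *m invmx (Bmat n lam b)
      = invmx (mxconj (jordan_block n lam)).
Proof.
move=> n_gt0 lam1 _; have lam0 : lam != 0 by rewrite -normr_eq0 lam1 oner_eq0.
set d := \det (Bmat n lam 1).
have d1 : `|d| = 1 by rewrite normr_det_Bmat // normr1 expr1n.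
have d0 : d != 0 by rewrite -normr_eq0 d1 oner_eq0.
exists (n.-root d^-1).
have b1 : `|n.-root d^-1| = 1 by rewrite norm_rootC normfV d1 invr1 rootC1.
have detB : \det (Bmat n lam (n.-root d^-1)) = 1.
  by rewrite Bmat_scale detZ rootCK // mulVf.
split=> //; split=> //; split; first exact: Bmat_mulmx_conj.
rewrite mxconj_jordan conjc_norm1 //; apply: intertwine_invmx.
  exact: jordanV_Bmat_jordan.
by rewrite unitmxE detB unitr1.
Qed.
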